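(* Consider the following setting. A ReLU neural network with input $x\in\mathbb{R}^{n_x}$ has hidden layers $\hat{x}^{(1)}=\sigma(\bm{W}^{(0)}x+b^{(0)})$, $\hat{x}^{(\ell+1)}=\sigma(\bm{W}^{(\ell)}\hat{x}^{(\ell)}+b^{(\ell)})$ for $\ell=1,\dots,n-1$, and output $y=\bm{W}^{(n)}\hat{x}^{(n)}+b^{(n)}$, where $\sigma(z)=\max(z,0)$ componentwise. Write $z^{(0)}=x$ and $z^{(\ell)}=\hat{x}^{(\ell)}$ for $\ell\ge1$ (the input of layer $\ell$). Let $\beta=(\beta^{(1)},\dots,\beta^{(n)})$ with $\beta^{(\ell)}$ of the same dimension as $\hat{x}^{(\ell)}$, let $\hat{x}=(\hat{x}^{(1)},\dots,\hat{x}^{(n)})$, and let $u=(x,\hat{x},\beta)\in\mathbb{R}^{t}$. Fix diagonal constant matrices $\bm{M}^{\min,(\ell)},\bm{M}^{\max,(\ell)}$, a matrix $\bm{A}_x$ and vector $b_x$, a vector $p$, a symmetric matrix $\bm{M}_i$, and the $i$-th standard basis vector $s_i$. Let $\bm{A}u-b\ge0$ denote the aggregate of the linear constraints: (a) $\bm{A}_x x-b_x\ge0$; (b) $0\le\beta\le 1$; (c) for each $\ell=1,\dots,n$: $\hat{x}^{(\ell)}\ge \bm{W}^{(\ell-1)}z^{(\ell-1)}+b^{(\ell-1)}$, $\hat{x}^{(\ell)}\ge0$, $\hat{x}^{(\ell)}\le \bm{W}^{(\ell-1)}z^{(\ell-1)}+b^{(\ell-1)}-\bm{M}^{\min,(\ell)}(\mathbf{1}-\beta^{(\ell)})$,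 $\hat{x}^{(\ell)}\le \bm{M}^{\max,(\ell)}\beta^{(\ell)}$; (d) $\bm{W}^{(n)}\hat{x}^{(n)}+b^{(n)}-p\ge0$; here $\bm{A}\in\mathbb{R}^{N\times t}$. The MIQP value is $$e_i^{\star}=\sup\{\,x^{T}\bm{M}_i x-s_i^{T}(\bm{W}^{(n)}\hat{x}^{(n)}+b^{(n)}) : \bm{A}u-b\ge0,\ \beta\in\{0,1\}^{d}\,\}.$$ For a subset $\mathcal{S}_c\subseteq\mathcal{S}=\{1,\dots,N\}^2$, let $\tilde{e}_i^{\star}(\mathcal{S}_c)$ be the optimal value (supremum) of the following SDP over symmetric matrices $$\hat{\bm{\Gamma}}=\begin{bmatrix}1 & x^{T} & \hat{x}^{T} & \beta^{T}\\ x & \bm{X} & \bm{\epsilon} & \bm{\gamma}\\ \hat{x} & \bm{\epsilon}^{T} & \bm{\eta} & \bm{\delta}\\ \beta & \bm{\gamma}^{T} & \bm{\delta}^{T} & \bm{B}\end{bmatrix}\succeq0,\qquad \bm{\Gamma}=\text{lower-right }t\times t\text{ block},$$ maximizing $\operatorname{tr}(\bm{M}_i\bm{X})-s_i^{T}(\bm{W}^{(n)}\hat{x}^{(n)}+b^{(n)})$ subject to: $\bm{A}u-b\ge0$; $\bm{\Omega}(\bm{\Gamma},u)_{j,k}\ge0$ for all $(j,k)\in\mathcal{S}_c$, where $\bm{\Omega}(\bm{\Gamma},u)=\bm{A}\bm{\Gamma}\bm{A}^{T}-\bm{A}ub^{T}-bu^{T}\bm{A}^{T}+bb^{T}$; $\operatorname{diag}(\bm{B})=\beta$;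 $\operatorname{diag}(\bm{\delta})=\hat{x}$ (i.e. the entry of $\hat{\bm\Gamma}$ in the row of $\hat{x}_k$ and column of the binary $\beta_k$ paired with the same neuron equals $\hat{x}_k$); and for every layer $\ell$ and neuron $k$, the entry of $\hat{\bm\Gamma}$ indexed by $(\hat{x}^{(\ell)}_k,\hat{x}^{(\ell)}_k)$ equals $\sum_j \bm{W}^{(\ell-1)}_{k,j}\,[\hat{\bm\Gamma}]_{(\hat{x}^{(\ell)}_k,\, z^{(\ell-1)}_j)}+b^{(\ell-1)}_k\hat{x}^{(\ell)}_k$. The Sequential Targeted Tightening algorithm produces nested index sets $\mathcal{S}_{c,[0]}\subseteq\mathcal{S}_{c,[1]}\subseteq\cdots$ (at each iteration, adding to the current set some indices $(j,k)$ at which the current SDP solution has $\bm\Omega_{j,k}<0$), and the performance guarantee at iteration $j$ is $\tilde{e}_{i,[j]}^{\star}=\tilde{e}_i^{\star}(\mathcal{S}_{c,[j]})$. Then for every iteration $j>0$, $$\tilde{e}_{i,[j-1]}^{\star}\ \ge\ \tilde{e}_{i,[j]}^{\star}\ \ge\ e_i^{\star}.$$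
   Context: $\succeq0$ denotes positive semidefiniteness; inequalities between vectors/matrices are componentwise; $\mathbf{1}$ is the all-ones vector; $d$ is the total number of binary variables (equal to the total number of hidden neurons). Optimal values are taken in the extended reals. *)

From HB Require Import structures.
From mathcomp Require Import all_boot all_order all_algebra.
From mathcomp Require Import boolp classical_sets reals constructive_ereal ereal.
Set Implicit Arguments. Unset Strict Implicit. Unset Printing Implicit Defensive.
Import Order.TTheory GRing.Theory Num.Theory.
Local Open Scope ring_scope.
Local Open Scope classical_set_scope.

(* Layer conventions: dims 0 = n_x (input dimension); for 1 <= l <= nh,
   dims l = width of hidden layer l (dimension of xhat^(l)).
   W l, bW l (for l < nh) are W^(l), b^(l), mapping z^(l) to layer l+1.
   Wo, bo are W^(n), b^(n) (output layer).
   Mmin l, Mmax l (for l < nh) are M^{min,(l+1)}, M^{max,(l+1)}.          *)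
Record problem (R : realType) := Problem {
  nh : nat;
  dims : nat -> nat;
  ny : nat;
  W : forall l : nat, 'M[R]_(dims l.+1, dims l);
  bW : forall l : nat, 'cV[R]_(dims l.+1);
  Wo : 'M[R]_(ny, dims nh);
  bo : 'cV[R]_ny;
  Mmin : forall l : nat, 'M[R]_(dims l.+1);
  Mmax : forall l : nat, 'M[R]_(dims l.+1);
  mx : nat;
  Ax : 'M[R]_(mx, dims 0);
  bx : 'cV[R]_mx;
  pv : 'cV[R]_ny;
  Mi : 'M[R]_(dims 0) }.

Definition psd (R : realType) (m : nat) (M : 'M[R]_m) : Prop :=
  M^T = M /\ forall v : 'cV[R]_m, 0 <= (v^T *m M *m v) 0 0.

Section Defs.
Variables (R : realType) (P : problem R).

Definition nx : nat := dims P 0.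
Definition off (l : nat) : nat := (\sum_(1 <= m < l) dims P m)%N.
(* d = total number of hidden neurons = number of binaries *)
Definition d : nat := off (nh P).+1.
(* u = (x, xhat, beta) in R^t *)
Definition t : nat := (nx + d + d)%N.
(* 0-based positions inside u *)
Definition ixh (l k : nat) : nat := (nx + off l + k)%N.
Definition ibeta (l k : nat) : nat := (nx + d + off l + k)%N.
Definition iz (l j : nat) : nat := if l == 0%N then j else ixh l j.

Definition getv (u : 'cV[R]_t) (c : nat) : R :=
  oapp (fun o : 'I_t => u o 0) 0 (insub c).
Definition getm (G : 'M[R]_t) (a b : nat) : R :=
  oapp (fun o : 'I_t => oapp (fun o' : 'I_t => G o o') 0 (insub b)) 0 (insub a).

(* A constraint row: (coefficients c |-> a_c, rhs b_r), meaning sum_c a_c u_c - b_r >= 0 *)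
Definition crow := ((nat -> R) * R)%type.

Definition ev (c : nat) : nat -> R := fun c' => (c' == c)%:R.

Definition rows_a : seq crow :=
  [seq ((fun c => \sum_(j < dims P 0) Ax P r j * ev j c), bx P r 0) | r <- enum 'I_(mx P)].

Definition rows_b : seq crow :=
  [seq (ev (nx + d + c)%N, 0) | c <- iota 0 d] ++
  [seq ((fun c' => - ev (nx + d + c)%N c'), -1) | c <- iota 0 d].

Definition linW (l : nat) (k : 'I_(dims P l.+1)) : nat -> R :=
  fun c => \sum_(j < dims P l) W P l k j * ev (iz l j) c.

Definition rows_c_neuron (l : nat) (k : 'I_(dims P l.+1)) : seq crow :=
  [::
      ((fun c => ev (ixh l.+1 k) c - linW k c), bW P l k 0);
      (ev (ixh l.+1 k), 0);
      ((fun c => linW k c + \sum_(j < dims P l.+1) Mmin P l k j * ev (ibeta l.+1 j) c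
                 - ev (ixh l.+1 k) c),
       - bW P l k 0 + \sum_(j < dims P l.+1) Mmin P l k j);
      ((fun c => \sum_(j < dims P l.+1) Mmax P l k j * ev (ibeta l.+1 j) c
                 - ev (ixh l.+1 k) c), 0) ].

Definition rows_c : seq crow :=
  flatten [seq flatten [seq rows_c_neuron k | k <- enum 'I_(dims P l.+1)]
          | l <- iota 0 (nh P)].

Definition rows_d : seq crow :=
  [seq ((fun c => \sum_(j < dims P (nh P)) Wo P r j * ev (ixh (nh P) j) c),
        pv P r 0 - bo P r 0) | r <- enum 'I_(ny P)].

Definition rows : seq crow := rows_a ++ rows_b ++ rows_c ++ rows_d.

Definition ncstr : nat := size rows.

Definition Amat : 'M[R]_(ncstr, t) :=
  \matrix_(r < ncstr, c < t) (nth (fun _ => 0, 0) rows r).1 c.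
Definition bvec : 'cV[R]_ncstr :=
  \col_(r < ncstr) (nth (fun _ => 0, 0) rows r).2.

Definition lin_ok (u : 'cV[R]_t) : Prop := forall r, 0 <= (Amat *m u - bvec) r 0.

Definition binary (u : 'cV[R]_t) : Prop :=
  forall c : 'I_d, getv u (nx + d + c)%N = 0 \/ getv u (nx + d + c)%N = 1.

Definition xpart (u : 'cV[R]_t) : 'cV[R]_(dims P 0) := \col_(j < dims P 0) getv u j.
Definition xhat_n (u : 'cV[R]_t) : 'cV[R]_(dims P (nh P)) :=
  \col_(k < dims P (nh P)) getv u (ixh (nh P) k).
Definition outp (u : 'cV[R]_t) : 'cV[R]_(ny P) := Wo P *m xhat_n u + bo P.

(* s_i^T y = y_i *)
Definition miqp_obj (i : 'I_(ny P)) (u : 'cV[R]_t) : R :=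
  ((xpart u)^T *m Mi P *m xpart u) 0 0 - outp u i 0.

Definition e_miqp (i : 'I_(ny P)) : \bar R :=
  ereal_sup [set (miqp_obj i u)%:E | u in [set u | lin_ok u /\ binary u]].

Definition Gamma_hat (u : 'cV[R]_t) (G : 'M[R]_t) : 'M[R]_(1 + t) :=
  block_mx 1%:M u^T u G.

Definition Omega (u : 'cV[R]_t) (G : 'M[R]_t) : 'M[R]_ncstr :=
  Amat *m G *m Amat^T - Amat *m u *m bvec^T - bvec *m u^T *m Amat^T + bvec *m bvec^T.

Definition sdp_feas (Sc : {set 'I_ncstr * 'I_ncstr}) (u : 'cV[R]_t) (G : 'M[R]_t) : Prop :=
  psd (Gamma_hat u G) /\
  lin_ok u /\
  (forall jk, jk \in Sc -> 0 <= Omega u G jk.1 jk.2) /\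
      (forall c : 'I_d, getm G (nx + d + c)%N (nx + d + c)%N = getv u (nx + d + c)%N) /\
      (forall l, (l < nh P)%N -> forall k : 'I_(dims P l.+1),
          getm G (ixh l.+1 k) (ibeta l.+1 k) = getv u (ixh l.+1 k)) /\
      (forall l, (l < nh P)%N -> forall k : 'I_(dims P l.+1),
          getm G (ixh l.+1 k) (ixh l.+1 k)
          = \sum_(j < dims P l) W P l k j * getm G (ixh l.+1 k) (iz l j)
            + bW P l k 0 * getv u (ixh l.+1 k)).

(* tr(M_i X) - s_i^T (W^(n) xhat^(n) + b^(n)), X = top-left n_x x n_x block of Gamma *)
Definition sdp_obj (i : 'I_(ny P)) (u : 'cV[R]_t) (G : 'M[R]_t) : R :=
  \tr (Mi P *m \matrix_(a < dims P 0, b < dims P 0) getm G a b) - outp u i 0.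

Definition e_sdp (i : 'I_(ny P)) (Sc : {set 'I_ncstr * 'I_ncstr}) : \bar R :=
  ereal_sup [set (sdp_obj i uG.1 uG.2)%:E | uG in [set uG | sdp_feas Sc uG.1 uG.2]].

End Defs.

From HB Require Import structures.
From mathcomp Require Import all_boot all_order all_algebra.
From mathcomp Require Import boolp classical_sets reals constructive_ereal ereal.
From mathcomp Require Import lra.
Set Implicit Arguments. Unset Strict Implicit. Unset Printing Implicit Defensive.
Import Order.TTheory GRing.Theory Num.Theory.
Local Open Scope ring_scope.

(** Growing the index set only adds constraints [Omega_jk >= 0], so the SDP
   feasible sets are nested and the optimal values decrease along the
   iterations.  For the lower bound, every MIQP-feasible [u] lifts to the
   rank-one point [(u, u u^T)]: then [Gamma_hat = w w^T] with [w = (1; u)] is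
   positive semidefinite, [Omega = (A u - b)(A u - b)^T] is entrywise
   nonnegative, the objective is unchanged, and the equality constraints hold
   because a binary [beta_k] together with the big-M constraints forces either
   [xhat_k = beta_k = 0] or [beta_k = 1] and [xhat_k = (W z + b)_k]. *)

Lemma all_flatten T (a : pred T) (ss : seq (seq T)) :
  all a (flatten ss) = all (all a) ss.
Proof. by elim: ss => //= s ss IH; rewrite all_cat IH. Qed.

Section MatrixFacts.
Variable R : realType.

Lemma mul_col_tr_entry n (v : 'cV[R]_n) a b : (v *m v^T) a b = v a 0 * v b 0.
Proof. by rewrite mxE big_ord1 !mxE (ord1 ord0). Qed.

Lemma psd_mul_tr m n (w : 'M[R]_(m, n)) : psd (w *m w^T).
Proof.
split; first by rewrite trmx_mul trmxK.
move=> v; have -> : v^T *m (w *m w^T) *m v = (v^T *m w) *m (v^T *m w)^T.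
  by rewrite trmx_mul trmxK !mulmxA.
by rewrite mxE; apply: sumr_ge0 => k _; rewrite [(_^T) k 0]mxE -expr2 sqr_ge0.
Qed.

Lemma mulmx_rank_one_expand m n (A : 'M[R]_(m, n)) (b : 'cV[R]_m) (u : 'cV[R]_n) :
  A *m (u *m u^T) *m A^T - A *m u *m b^T - b *m u^T *m A^T + b *m b^T
  = (A *m u - b) *m (A *m u - b)^T.
Proof.
rewrite raddfB /= trmx_mul mulmxDr !mulmxDl !mulmxN !mulNmx opprK !mulmxA.
by rewrite !addrA; congr (_ + _); exact: addrAC.
Qed.

Lemma sum_diag_mx_mul n (M : 'M[R]_n) (g : 'I_n -> R) k : is_diag_mx M ->
  \sum_(j < n) M k j * g j = M k k * g k.
Proof.
move=> /is_diag_mxP D; rewrite (bigD1 k) //= big1 ?addr0 // => j jk.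
by rewrite D ?mul0r // eq_sym.
Qed.

End MatrixFacts.

Section Relaxation.
Variables (R : realType) (P : problem R).
Implicit Types (u : 'cV[R]_(t P)) (G : 'M[R]_(t P)).

Definition row_holds u (rw : crow R) : bool :=
  0 <= \sum_(c < t P) rw.1 c * u c 0 - rw.2.

Lemma lin_ok_rows u : lin_ok u -> all (row_holds u) (rows P).
Proof.
move=> H; apply/(all_nthP (fun _ => 0, 0)) => r Hr.
have := H (Ordinal Hr); rewrite /row_holds !mxE.
by under eq_bigr => c _ do rewrite mxE.
Qed.

Lemma sum_ev_mul u e : \sum_(c < t P) ev R e c * u c 0 = getv u e.
Proof.
rewrite /getv; case: insubP => [o _ <-|He].
  rewrite (bigD1 o) //= /ev eqxx mul1r big1 ?addr0 // => c /negbTE.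
  by rewrite -val_eqE /= => ->; rewrite mul0r.
rewrite big1 //= => c _; rewrite /ev.
case: eqP => [Ec|]; last by rewrite mul0r.
by move: He; rewrite -Ec ltn_ord.
Qed.

Lemma sum_lin_ev_mul u n (a : 'I_n -> R) (f : 'I_n -> nat) :
  \sum_(c < t P) (\sum_(j < n) a j * ev R (f j) c) * u c 0
  = \sum_(j < n) a j * getv u (f j).
Proof.
under eq_bigr => c _ do rewrite mulr_suml.
rewrite exchange_big /=; apply: eq_bigr => j _.
by rewrite -sum_ev_mul mulr_sumr; apply: eq_bigr => c _; rewrite mulrA.
Qed.

Lemma neuron_rows_hold u l (k : 'I_(dims P l.+1)) : lin_ok u -> (l < nh P)%N ->
  all (row_holds u) (rows_c_neuron k).
Proof.
move=> /lin_ok_rows; rewrite /rows !all_cat => /and4P [_ _ + _].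
rewrite /rows_c all_flatten all_map => /allP /(_ l) + Hl.
rewrite mem_iota add0n => /(_ Hl) /=; rewrite all_flatten all_map.
by move=> /allP /(_ k); rewrite mem_enum; exact.
Qed.

Lemma neuron_constraints u l (k : 'I_(dims P l.+1)) :
  lin_ok u -> (l < nh P)%N -> is_diag_mx (Mmin P l) -> is_diag_mx (Mmax P l) ->
  let xh := getv u (ixh P l.+1 k) in let bt := getv u (ibeta P l.+1 k) in
  let wz := \sum_(j < dims P l) W P l k j * getv u (iz P l j) in
  [/\ wz + bW P l k 0 <= xh, 0 <= xh,
      xh <= wz + bW P l k 0 - Mmin P l k k * (1 - bt)
    & xh <= Mmax P l k k * bt].
Proof.
move=> Hu Hl Dmin Dmax xh bt wz.
have := neuron_rows_hold k Hu Hl.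
rewrite /= /row_holds /= /linW !andbT => /and4P [h1 h2 h3 h4].
have sumMmin : \sum_(j < dims P l.+1) Mmin P l k j = Mmin P l k k.
  have := sum_diag_mx_mul (fun _ => 1) k Dmin.
  by under eq_bigr => j _ do rewrite mulr1; rewrite mulr1.
split.
- move: h1; under eq_bigr => c _ do rewrite mulrBl.
  by rewrite sumrB sum_ev_mul sum_lin_ev_mul -/xh -/wz; lra.
- by move: h2; rewrite sum_ev_mul subr0.
- move: h3; rewrite sumMmin; under eq_bigr => c _ do rewrite mulrBl mulrDl.
  rewrite sumrB big_split /= !sum_lin_ev_mul sum_ev_mul.
  by rewrite (sum_diag_mx_mul _ k Dmin) -/xh -/wz -/bt; lra.
- move: h4; under eq_bigr => c _ do rewrite mulrBl.
  rewrite sumrB sum_lin_ev_mul sum_ev_mul subr0.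
  by rewrite (sum_diag_mx_mul _ k Dmax) -/xh -/bt; lra.
Qed.

Lemma relu_neuron_cases u l (k : 'I_(dims P l.+1)) :
  lin_ok u -> (l < nh P)%N -> is_diag_mx (Mmin P l) -> is_diag_mx (Mmax P l) ->
  getv u (ibeta P l.+1 k) = 0 \/ getv u (ibeta P l.+1 k) = 1 ->
  let xh := getv u (ixh P l.+1 k) in let bt := getv u (ibeta P l.+1 k) in
  let wz := \sum_(j < dims P l) W P l k j * getv u (iz P l j) in
  (xh = 0 /\ bt = 0) \/ (xh = wz + bW P l k 0 /\ bt = 1).
Proof.
move=> Hu Hl Dmin Dmax Hbt xh bt wz.
have [h1 h2 h3 h4] := neuron_constraints k Hu Hl Dmin Dmax.
case: Hbt => Hbt; [left | right]; move: h3 h4; rewrite /xh /bt /wz Hbt => h3 h4.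
- by rewrite mulr0 in h4; split=> //; lra.
- by rewrite subrr mulr0 subr0 in h3; split=> //; lra.
Qed.

Lemma off_add_lt_d l k : (l < nh P)%N -> (k < dims P l.+1)%N -> (off P l.+1 + k < d P)%N.
Proof.
move=> Hl Hk; have offS : off P l.+2 = (off P l.+1 + dims P l.+1)%N.
  by rewrite /off big_nat_recr.
have off_mono : (off P l.+2 <= d P)%N.
  by rewrite /d /off [X in (_ <= X)%N](big_cat_nat _ (n := l.+2)) //= leq_addr.
by apply: leq_trans off_mono; rewrite offS ltn_add2l.
Qed.

Lemma getm_mul_tr u a b : getm (u *m u^T) a b = getv u a * getv u b.
Proof.
rewrite /getm /getv; case: (insub a) => [o|]; case: (insub b) => [o'|] /=;
  by rewrite ?mul0r ?mulr0 // mul_col_tr_entry.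
Qed.

Lemma Omega_rank_one u :
  Omega u (u *m u^T) = (Amat P *m u - bvec P) *m (Amat P *m u - bvec P)^T.
Proof. exact: mulmx_rank_one_expand. Qed.

Lemma psd_Gamma_hat_rank_one u : psd (Gamma_hat u (u *m u^T)).
Proof.
have -> : Gamma_hat u (u *m u^T) = col_mx 1%:M u *m (col_mx 1%:M u)^T.
  by rewrite tr_col_mx mul_col_row trmx1 !mul1mx mulmx1.
exact: psd_mul_tr.
Qed.

Lemma sdp_obj_rank_one (i : 'I_(ny P)) u : sdp_obj i u (u *m u^T) = miqp_obj i u.
Proof.
rewrite /sdp_obj /miqp_obj; congr (_ - _).
have -> : \matrix_(a < dims P 0, b < dims P 0) getm (u *m u^T) a b
          = xpart u *m (xpart u)^T.
  by apply/matrixP => a b; rewrite mul_col_tr_entry !mxE getm_mul_tr.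
by rewrite mulmxA mxtrace_mulC /mxtrace big_ord1 mulmxA.
Qed.

Lemma sdp_feas_rank_one Sc u : lin_ok u -> binary u ->
  (forall l, is_diag_mx (Mmin P l)) -> (forall l, is_diag_mx (Mmax P l)) ->
  sdp_feas Sc u (u *m u^T).
Proof.
move=> Hu Hb Dmin Dmax.
have relu_cases l (Hl : (l < nh P)%N) (k : 'I_(dims P l.+1)) :=
  relu_neuron_cases (k := k) Hu Hl (Dmin l) (Dmax l).
have binary_beta l (Hl : (l < nh P)%N) (k : 'I_(dims P l.+1)) :
    getv u (ibeta P l.+1 k) = 0 \/ getv u (ibeta P l.+1 k) = 1.
  by have := Hb (Ordinal (off_add_lt_d Hl (ltn_ord k))); rewrite /= /ibeta !addnA.
split; first exact: psd_Gamma_hat_rank_one.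
split=> //; split; [|split; [|split]].
- move=> jk _; rewrite Omega_rank_one mul_col_tr_entry.
  by apply: mulr_ge0; apply: Hu.
- by move=> c; rewrite getm_mul_tr; case: (Hb c) => ->; rewrite ?mulr0 ?mulr1.
- move=> l Hl k; rewrite getm_mul_tr.
  by case: (relu_cases l Hl k (binary_beta l Hl k)) => -[-> ->]; rewrite ?mul0r ?mulr1.
- move=> l Hl k; under eq_bigr => j _ do rewrite getm_mul_tr mulrCA.
  rewrite getm_mul_tr -mulr_sumr [bW P l k 0 * _]mulrC -mulrDr.
  by case: (relu_cases l Hl k (binary_beta l Hl k)) => -[-> _]; rewrite ?mul0r.
Qed.

Lemma sdp_feas_subset (Sc1 Sc2 : {set 'I_(ncstr P) * 'I_(ncstr P)}) u G :
  Sc1 \subset Sc2 -> sdp_feas Sc2 u G -> sdp_feas Sc1 u G.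
Proof.
move=> sub12 [psdG [Hu [HOmega rest]]]; split=> //; split=> //; split=> //.
by move=> jk /(fintype.subsetP sub12); exact: HOmega.
Qed.

Lemma le_e_sdp (i : 'I_(ny P)) (Sc1 Sc2 : {set 'I_(ncstr P) * 'I_(ncstr P)}) :
  Sc1 \subset Sc2 -> (e_sdp i Sc2 <= e_sdp i Sc1)%E.
Proof.
move=> sub12; apply: ereal_sup_le => _ [uG feas <-].
by exists uG => //; exact: sdp_feas_subset feas.
Qed.

Lemma e_miqp_le_e_sdp (i : 'I_(ny P)) (Sc : {set 'I_(ncstr P) * 'I_(ncstr P)}) :
  (forall l, is_diag_mx (Mmin P l)) -> (forall l, is_diag_mx (Mmax P l)) ->
  (e_miqp i <= e_sdp i Sc)%E.
Proof.
move=> Dmin Dmax; apply: ge_ereal_sup => _ [u [Hu Hb] <-].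
apply: ereal_sup_ubound; exists (u, u *m u^T); last by rewrite /= sdp_obj_rank_one.
exact: sdp_feas_rank_one.
Qed.

End Relaxation.

Theorem theorem1 (R : realType) (P : problem R) (i : 'I_(ny P))
  (Hn : (0 < nh P)%N)
  (HMi : (Mi P)^T = Mi P)
  (Hmin : forall l : nat, is_diag_mx (Mmin P l))
  (Hmax : forall l : nat, is_diag_mx (Mmax P l))
  (J : nat) (Sc : nat -> {set 'I_(ncstr P) * 'I_(ncstr P)})
  (Halg : forall j : nat, (j < J)%N ->
     Sc j \subset Sc j.+1 /\
     exists (u : 'cV[R]_(t P)) (G : 'M[R]_(t P)),
       [/\ sdp_feas (Sc j) u G,
           ((sdp_obj i u G)%:E = e_sdp i (Sc j))%E &
           forall jk, jk \in Sc j.+1 :\: Sc j -> Omega u G jk.1 jk.2 < 0]) :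
  forall j : nat, (0 < j <= J)%N ->
    (e_sdp i (Sc j) <= e_sdp i (Sc j.-1))%E /\ (e_miqp i <= e_sdp i (Sc j))%E.
Proof.
(* Only the nesting of the index sets matters: neither the violated entries
   chosen by the algorithm nor [Hn] and [HMi] are needed for the bounds. *)
move=> j /andP [j_gt0 j_leJ].
have jJ : (j.-1 < J)%N by rewrite prednK.
have [nested _] := Halg j.-1 jJ.
rewrite prednK // in nested.
split; first exact: le_e_sdp.
exact: e_miqp_le_e_sdp.
Qed.
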